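(* For every regular language $L\subseteq\Sigma^*$, the map \[\mathrm{dr}_L\colon [\mathrm{LQ}(L^r)]^{\mathsf{op}}\to\mathrm{LQ}(L),\qquad K\mapsto \big(\overline{K^r}\big)^{-1}L,\] is a well-defined isomorphism of $\mathbf{JSL}$-dfas; i.e., the minimal $\mathbf{JSL}$-dfas of $L$ and $L^r$ are dual to each other.
   Context: For $u\in\Sigma^*$, $u^{-1}L=\{w:uw\in L\}$; for $U\subseteq\Sigma^*$, $U^{-1}L=\bigcup_{u\in U}u^{-1}L$. $\overline{K}=\Sigma^*\setminus K$, $K^r=\{w^r:w\in K\}$ where $w^r$ is the reversal of $w$. $\mathrm{LQ}(L)$ is the $\mathbf{JSL}$-dfa whose states are all finite unions (including $\emptyset$) of left derivatives $u^{-1}L$, ordered by inclusion, with transitions $K\mapsto a^{-1}K$, initial state $L$, and final states those $K$ with $\epsilon\in K$. A $\mathbf{JSL}$-dfa is a finite semilattice $S$ with join-preserving transitions $\delta_a$, an initial state $s_0$, and final states $F=\{s:s\not\le s_f\}$ for some $s_f$; morphisms are join-preserving maps preserving transitions, initial state and final states (both ways). The dual $A^{\mathsf{op}}$ has states $S$ with reversed order, transitions $\delta_a^*(s)=$ largest $t$ with $\delta_a(t)\le s$, initial state the largest non-final state of $A$, final states $\{s: s_0\not\le s\}$. *)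

From mathcomp Require Import all_boot.
From Stdlib Require Import ClassicalEpsilon.
From Stdlib Require List.

Set Implicit Arguments.
Unset Strict Implicit.
Unset Printing Implicit Defensive.

Section Lang.
Variable Sigma : Type.

Definition word := seq Sigma.
Definition lang := word -> Prop.

Definition deriv (u : word) (L : lang) : lang := fun w => L (u ++ w).

Definition rev_lang (K : lang) : lang := fun w => K (rev w).
Definition compl_lang (K : lang) : lang := fun w => ~ K w.

Definition lquot (U : lang) (L : lang) : lang :=
  fun w => exists u, U u /\ deriv u L w.

Definition dr (L K : lang) : lang := lquot (compl_lang (rev_lang K)) L.

Definition is_LQ (L K : lang) : Prop :=
  exists U : seq word, forall w, K w <-> exists u, List.In u U /\ deriv u L w.

End Lang.

Definition regular (Sigma : finType) (L : lang Sigma) : Prop :=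
  exists (Q : finType) (d : Q -> Sigma -> Q) (q0 : Q) (F : pred Q),
    forall w, L w <-> F (foldl d q0 w).

Record jsl_dfa (Sigma : Type) := JSLdfa {
  jst : Type;
  jle : jst -> jst -> Prop;
  jjoin : jst -> jst -> jst;
  jbot : jst;
  jdelta : Sigma -> jst -> jst;
  jinit : jst;
  jfinal : jst -> Prop }.

Arguments jst {Sigma}.
Arguments jle {Sigma} _ _ _.
Arguments jjoin {Sigma} _ _ _.
Arguments jbot {Sigma}.
Arguments jdelta {Sigma} _ _ _.
Arguments jinit {Sigma}.
Arguments jfinal {Sigma} _ _.

Definition is_jsl_dfa (Sigma : Type) (A : jsl_dfa Sigma) : Prop :=
  (exists s : seq (jst A), forall x, List.In x s) /\
  (forall x, jle A x x) /\
  (forall x y, jle A x y -> jle A y x -> x = y) /\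
  (forall x y z, jle A x y -> jle A y z -> jle A x z) /\
  (forall x y z, jle A (jjoin A x y) z <-> (jle A x z /\ jle A y z)) /\
  (forall x, jle A (jbot A) x) /\
  (forall a x y, jdelta A a (jjoin A x y) = jjoin A (jdelta A a x) (jdelta A a y)) /\
  (forall a, jdelta A a (jbot A) = jbot A) /\
  (exists sf, forall s, jfinal A s <-> ~ jle A s sf).

Definition is_greatest (T : Type) (le : T -> T -> Prop) (P : T -> Prop) (x : T) :=
  P x /\ forall y, P y -> le y x.

(* The dual JSL-dfa A^op: reversed order (so join = meet of A, bottom =
   top of A), delta*_a(s) = largest t with delta_a(t) <= s, initial state
   the largest non-final state of A, final states {s | ~ s0 <= s}. *)
Definition dual (Sigma : Type) (A : jsl_dfa Sigma) : jsl_dfa Sigma :=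
  let inh := inhabits (jinit A) in
  {| jst := jst A;
     jle := fun x y => jle A y x;
     jjoin := fun x y => epsilon inh
                (is_greatest (jle A) (fun z => jle A z x /\ jle A z y));
     jbot := epsilon inh (is_greatest (jle A) (fun _ => True));
     jdelta := fun a s => epsilon inh
                (is_greatest (jle A) (fun t => jle A (jdelta A a t) s));
     jinit := epsilon inh (is_greatest (jle A) (fun t => ~ jfinal A t));
     jfinal := fun s => ~ jle A (jinit A) s |}.

Definition jsl_morph (Sigma : Type) (A B : jsl_dfa Sigma) (f : jst A -> jst B) :=
  (forall x y, f (jjoin A x y) = jjoin B (f x) (f y)) /\
  f (jbot A) = jbot B /\
  (forall a x, f (jdelta A a x) = jdelta B a (f x)) /\
  f (jinit A) = jinit B /\
  (forall x, jfinal A x <-> jfinal B (f x)).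

Definition jsl_iso (Sigma : Type) (A B : jsl_dfa Sigma) (f : jst A -> jst B) :=
  jsl_morph f /\ exists g : jst B -> jst A, jsl_morph g /\ cancel f g /\ cancel g f.

Section LQ.
Variables (Sigma : Type) (L : lang Sigma).

Definition LQst := {K : lang Sigma | is_LQ L K}.

Lemma is_LQ_union (K1 K2 : lang Sigma) :
  is_LQ L K1 -> is_LQ L K2 -> is_LQ L (fun w => K1 w \/ K2 w).
Proof.
move=> [U1 H1] [U2 H2]; exists (U1 ++ U2) => w.
rewrite H1 H2; split.
- case=> [[u [Hu Hw]]|[u [Hu Hw]]]; exists u; split=> //;
    apply List.in_or_app; auto.
- case=> u [Hu Hw]; case: (List.in_app_or _ _ _ Hu) => Hu'; [left|right];
    by exists u.
Qed.

Lemma is_LQ_empty : is_LQ L (fun _ => False).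
Proof. by exists [::] => w; split=> // -[u []]. Qed.

Lemma is_LQ_deriv (a : Sigma) (K : lang Sigma) :
  is_LQ L K -> is_LQ L (deriv [:: a] K).
Proof.
move=> [U H]; exists (map (fun u => u ++ [:: a]) U) => w.
rewrite /deriv /= H; split.
- case=> u [Hu Hw]; exists (u ++ [:: a]); split; last by rewrite -catA.
  exact: (List.in_map (fun u => u ++ [:: a]) U u Hu).
- case=> v [Hv Hw]; case: (proj1 (List.in_map_iff _ _ _) Hv) => u [Hvu Hu].
  exists u; split=> //; move: Hw; rewrite -Hvu /deriv -catA //.
Qed.

Lemma is_LQ_L : is_LQ L L.
Proof.
exists [:: [::]] => w; split.
- by move=> Hw; exists [::]; split=> //; left.
- by case=> u [[<-|[]] Hw].
Qed.

Definition LQ : jsl_dfa Sigma :=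
  {| jst := LQst;
     jle := fun K1 K2 => forall w, proj1_sig K1 w -> proj1_sig K2 w;
     jjoin := fun K1 K2 => exist _ _ (is_LQ_union (proj2_sig K1) (proj2_sig K2));
     jbot := exist _ _ is_LQ_empty;
     jdelta := fun a K => exist _ _ (is_LQ_deriv a (proj2_sig K));
     jinit := exist _ _ is_LQ_L;
     jfinal := fun K => proj1_sig K [::] |}.

End LQ.

From mathcomp Require Import all_boot.
From Stdlib Require Import ClassicalEpsilon Classical FunctionalExtensionality PropExtensionality.
From Stdlib Require List.

Set Implicit Arguments.
Unset Strict Implicit.
Unset Printing Implicit Defensive.

(* 1. Duality in general: for any JSL-dfa A, the dual A^op is again a
      JSL-dfa.  Its structure maps are greatest elements of subsets that are
      closed under finite joins (such greatest elements exist because A is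
      finite), and each is characterised by a Galois-type property, e.g.
      t <= delta*_a(s) iff delta_a(t) <= s.
   2. LQ(M) for M regular: the language U^{-1}M of any set of words U is a
      finite union of derivatives (the derivative u^{-1}M depends only on the
      state reached by u), there are finitely many states, and LQ(M) is a
      JSL-dfa.  Regularity is preserved by reversal (subset construction).
   3. The map dr_L: the key identity is  w in dr_L(K) iff (w^r)^{-1}L^r is
      not contained in K.  Combined with the characterisations of step 1
      this makes dr_L a morphism, and dr_{L^r} o dr_L = id because every
      state is the union of the derivatives it contains. *)

Lemma InP (T : eqType) (x : T) (s : seq T) : List.In x s <-> x \in s.
Proof.
elim: s => [|y s IH] //=; rewrite in_cons; split.
- by case=> [->|/IH ->]; rewrite ?eqxx ?orbT.
- by case/orP=> [/eqP ->|/IH]; [left|right].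
Qed.

Lemma finite_of_code (T : Type) (Q : finType) (R : T -> Q -> Prop) :
  inhabited T -> (forall x, exists q, R x q) ->
  (forall x y q, R x q -> R y q -> x = y) ->
  exists s : seq T, forall x, List.In x s.
Proof.
move=> inh Rtotal Rinj; pose decode q := epsilon inh (fun x => R x q).
exists (map decode (enum Q)) => x; have [q Rxq] := Rtotal x.
have Rdecode := epsilon_spec inh (fun y => R y q) (ex_intro _ x Rxq).
rewrite -(Rinj _ _ _ Rdecode Rxq).
by apply: (List.in_map decode); apply/InP; rewrite mem_enum.
Qed.

Lemma finite_representatives (T : Type) (Q : finType) (phi : T -> Q)
    (P : T -> Prop) :
  exists U : seq T, (forall u, List.In u U -> P u) /\
    (forall u, P u -> exists2 u', List.In u' U & phi u' = phi u).
Proof.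
suff /(_ (enum Q)) [U [UP Urep]] : forall qs : seq Q, exists U : seq T,
    (forall u, List.In u U -> P u) /\
    (forall u, P u -> phi u \in qs -> exists2 u', List.In u' U & phi u' = phi u).
  by exists U; split=> // u Pu; apply: Urep; rewrite ?mem_enum.
elim=> [|q qs [U [UP Urep]]]; first by exists [::].
case: (classic (exists u, P u /\ phi u = q)) => [[u0 [Pu0 <-]]|noq].
- exists (u0 :: U); split=> [u [<-|/UP]|u Pu] //.
  rewrite in_cons; case: eqP => [->|_ /= /(Urep u Pu) [u' Hu' Eu]].
  + by exists u0; first left.
  + by exists u'; first right.
- exists U; split=> // u Pu; rewrite in_cons; case: eqP => [Eq|_ /=].
  + by case: noq; exists u.
  + exact: Urep.
Qed.

Lemma morph_inv (Sigma : Type) (A B : jsl_dfa Sigma) (f : jst A -> jst B)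
    (g : jst B -> jst A) :
  jsl_morph f -> cancel f g -> cancel g f -> jsl_morph g.
Proof.
move=> [fJ [fB [fD [fI fF]]]] fK gK.
split; first by move=> x y; rewrite -{1}(gK x) -{1}(gK y) -fJ fK.
split; first by rewrite -fB fK.
split; first by move=> a x; rewrite -{1}(gK x) -fD fK.
split; first by rewrite -fI fK.
by move=> x; rewrite fF gK.
Qed.

Section Duality.
Variables (Sigma : Type) (A : jsl_dfa Sigma).
Hypothesis HA : is_jsl_dfa A.

Lemma jsl_finite : exists s : seq (jst A), forall x, List.In x s.
Proof. by case: HA. Qed.

Lemma jle_refl x : jle A x x.
Proof. by have [_ [refl _]] := HA. Qed.

Lemma jle_anti x y : jle A x y -> jle A y x -> x = y.
Proof. by have [_ [_ [anti _]]] := HA; apply: anti. Qed.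

Lemma jle_trans x y z : jle A x y -> jle A y z -> jle A x z.
Proof. by have [_ [_ [_ [trans _]]]] := HA; apply: trans. Qed.

Lemma jle_join x y z : jle A (jjoin A x y) z <-> jle A x z /\ jle A y z.
Proof. by have [_ [_ [_ [_ [join _]]]]] := HA. Qed.

Lemma jle_bot x : jle A (jbot A) x.
Proof. by have [_ [_ [_ [_ [_ [bot _]]]]]] := HA. Qed.

Lemma jdelta_join a x y :
  jdelta A a (jjoin A x y) = jjoin A (jdelta A a x) (jdelta A a y).
Proof. by have [_ [_ [_ [_ [_ [_ [djoin _]]]]]]] := HA. Qed.

Lemma jdelta_bot a : jdelta A a (jbot A) = jbot A.
Proof. by have [_ [_ [_ [_ [_ [_ [_ [dbot _]]]]]]]] := HA. Qed.

Lemma jnonfinal_principal : exists sf, forall s, ~ jfinal A s <-> jle A s sf.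
Proof.
have [_ [_ [_ [_ [_ [_ [_ [_ [sf Hsf]]]]]]]]] := HA.
by exists sf => s; rewrite Hsf; split=> [/NNPP|le_s /(_ le_s)].
Qed.

Lemma jle_yoneda x y : (forall t, jle A t x <-> jle A t y) -> x = y.
Proof.
by move=> H; apply: jle_anti; [apply/H|apply/H]; apply: jle_refl.
Qed.

Lemma jdelta_mono a x y : jle A x y -> jle A (jdelta A a x) (jdelta A a y).
Proof.
move=> le_xy; have join_xy : jjoin A x y = y.
  apply: jle_anti; first by apply/jle_join; split=> //; apply: jle_refl.
  by have /jle_join [] := jle_refl (jjoin A x y).
rewrite -join_xy jdelta_join.
by have /jle_join [] := jle_refl (jjoin A (jdelta A a x) (jdelta A a y)).
Qed.

Lemma greatest_exists (P : jst A -> Prop) :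
  P (jbot A) -> (forall x y, P x -> P y -> P (jjoin A x y)) ->
  exists g, is_greatest (jle A) P g.
Proof.
move=> Pbot Pjoin; have [s Hs] := jsl_finite.
suff /(_ s) [g [Pg Hg]] : forall l : seq (jst A),
    exists g, P g /\ forall x, List.In x l -> P x -> jle A x g.
  by exists g; split=> // x; apply: Hg.
elim=> [|x l [g [Pg Hg]]]; first by exists (jbot A).
case: (classic (P x)) => [Px|nPx].
- have /jle_join [le_x le_g] := jle_refl (jjoin A x g).
  exists (jjoin A x g); split; first exact: Pjoin.
  by move=> y [<-|/Hg Hy] // /Hy /jle_trans; apply.
- by exists g; split=> // y [<-|/Hg].
Qed.

Lemma greatest_spec (inh : inhabited (jst A)) (P : jst A -> Prop) :
  P (jbot A) -> (forall x y, P x -> P y -> P (jjoin A x y)) ->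
  (forall x y, jle A x y -> P y -> P x) ->
  forall t, jle A t (epsilon inh (is_greatest (jle A) P)) <-> P t.
Proof.
move=> Pbot Pjoin Pdown t.
have [Pg Hg] := epsilon_spec inh _ (greatest_exists Pbot Pjoin).
by split; [move/Pdown; apply|apply: Hg].
Qed.

Lemma dual_join_spec x y t :
  jle A t (jjoin (dual A) x y) <-> jle A t x /\ jle A t y.
Proof.
apply: greatest_spec; first by split; apply: jle_bot.
- by move=> u v [ux uy] [vx vy]; split; apply/jle_join.
- by move=> u v le_uv [vx vy]; split; apply: jle_trans le_uv _.
Qed.

Lemma dual_bot_spec t : jle A t (jbot (dual A)).
Proof. by apply/greatest_spec. Qed.

Lemma dual_delta_spec a s t :
  jle A t (jdelta (dual A) a s) <-> jle A (jdelta A a t) s.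
Proof.
apply: greatest_spec; first by rewrite jdelta_bot; apply: jle_bot.
- by move=> u v Hu Hv; rewrite jdelta_join; apply/jle_join.
- by move=> u v /(jdelta_mono a) /jle_trans; apply.
Qed.

Lemma dual_init_spec t : jle A t (jinit (dual A)) <-> ~ jfinal A t.
Proof.
have [sf Hsf] := jnonfinal_principal.
apply: greatest_spec; first by apply/Hsf; apply: jle_bot.
- by move=> u v /Hsf Hu /Hsf Hv; apply/Hsf/jle_join.
- by move=> u v le_uv /Hsf Hv; apply/Hsf; apply: jle_trans le_uv Hv.
Qed.

Theorem dual_is_jsl_dfa : is_jsl_dfa (dual A).
Proof.
split; first exact: jsl_finite.
split; first exact: jle_refl.
split; first by move=> x y le_yx le_xy; apply: jle_anti.
split; first by move=> x y z /= le_yx le_zy; apply: jle_trans le_zy le_yx.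
split; first exact: dual_join_spec.
split; first exact: dual_bot_spec.
split.
  move=> a x y; apply: jle_yoneda => t.
  by rewrite dual_delta_spec !dual_join_spec !dual_delta_spec.
split.
  move=> a; apply: jle_yoneda => t.
  by rewrite dual_delta_spec; split=> _; apply: dual_bot_spec.
by exists (jinit A).
Qed.

End Duality.

Section Quotients.
Variables (Sigma : Type) (M : lang Sigma).

Lemma lang_ext (K1 K2 : lang Sigma) : (forall w, K1 w <-> K2 w) -> K1 = K2.
Proof.
by move=> H; apply: functional_extensionality => w;
  apply: propositional_extensionality.
Qed.

Lemma LQ_eq (x y : LQst M) : (forall w, proj1_sig x w <-> proj1_sig y w) -> x = y.
Proof.
case: x => [K1 p1]; case: y => [K2 p2] /= /lang_ext E; subst K2.
by rewrite (proof_irrelevance _ p1 p2).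
Qed.

Lemma is_LQ_deriv_word (u : word Sigma) : is_LQ M (deriv u M).
Proof.
exists [:: u] => w; split=> [Mw|[v [[<-|[]] Mw]]] //.
by exists u; split=> //; left.
Qed.

Definition deriv_state (u : word Sigma) : LQst M :=
  exist _ (deriv u M) (is_LQ_deriv_word u).

Lemma jdelta_deriv_state (a : Sigma) (u : word Sigma) :
  jdelta (LQ M) a (deriv_state u) = deriv_state (rcons u a).
Proof. by apply: LQ_eq => w; rewrite /= /deriv /= cat_rcons. Qed.

Lemma LQ_union_of_derivs (K : lang Sigma) : is_LQ M K ->
  forall v, K v <-> exists u, deriv u M v /\ forall w, deriv u M w -> K w.
Proof.
move=> [U HU] v; split=> [/HU [u [Uu Mv]]|[u [Mv /(_ v Mv)]]] //.
by exists u; split=> // w Mw; apply/HU; exists u.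
Qed.

End Quotients.

Section RegularQuotients.
Variables (Sigma : finType) (M : lang Sigma).
Variables (Q : finType) (d : Q -> Sigma -> Q) (q0 : Q) (F : pred Q).
Hypothesis HM : forall w, M w <-> F (foldl d q0 w).

Lemma deriv_run (u w : word Sigma) : deriv u M w <-> F (foldl d (foldl d q0 u) w).
Proof. by rewrite /deriv HM foldl_cat. Qed.

(* U^{-1}M is a finite union of derivatives: one representative word for
   each state reached by U suffices. *)
Lemma lquot_is_LQ (P : lang Sigma) : is_LQ M (lquot P M).
Proof.
have [U [UP Urep]] := finite_representatives (foldl d q0) P.
exists U => w; split=> [[u [Pu Mw]]|[u [/UP Pu Mw]]]; last by exists u.
have [u' Uu' Eu] := Urep u Pu.
by exists u'; split=> //; apply/deriv_run; rewrite Eu; apply/deriv_run.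
Qed.

(* A state of LQ(M) is coded by the set of DFA states it is the union over. *)
Lemma LQ_finite : exists s : seq (LQst M), forall x, List.In x s.
Proof.
apply: (@finite_of_code _ {set Q}
  (fun x S => forall w, proj1_sig x w <-> exists2 q, q \in S & F (foldl d q w))).
- exact: inhabits (jinit (LQ M)).
- case=> K [U HU]; exists [set q | q \in map (foldl d q0) U] => w /=.
  rewrite HU; split=> [[u [Uu /deriv_run Mw]]|[q]].
  + by exists (foldl d q0 u); rewrite // inE; apply/InP/List.in_map.
  + rewrite inE => /InP /List.in_map_iff [u [<- Uu]] /deriv_run Mw.
    by exists u.
- by move=> x y S Hx Hy; apply: LQ_eq => w; rewrite Hx Hy.
Qed.

(* LQ(M) is a JSL-dfa; its final states are those not below the union of
   the derivatives u^{-1}M with u not in M. *)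
Lemma LQ_is_jsl_dfa : is_jsl_dfa (LQ M).
Proof.
split; first exact: LQ_finite.
split; first by move=> x w.
split.
  by move=> x y le_xy le_yx; apply: LQ_eq => w; split; [apply: le_xy|apply: le_yx].
split; first by move=> x y z le_xy le_yz w /le_xy /le_yz.
split.
  move=> x y z /=; split=> [le_join|[le_x le_y] w [/le_x|/le_y]] //.
  by split=> w Kw; apply: le_join; [left|right].
split; first by move=> x w.
split; first by move=> a x y; apply: LQ_eq.
split; first by move=> a; apply: LQ_eq.
exists (exist _ _ (lquot_is_LQ (fun u => ~ M u))) => x /=; split.
- by move=> x_eps /(_ [::] x_eps) [u [nMu]]; rewrite /deriv cats0.
- move=> nle; apply: NNPP => nx_eps; apply: nle.
  move=> w /(LQ_union_of_derivs (proj2_sig x)) [u [Mw sub]].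
  by exists u; split=> // Mu; apply/nx_eps/sub; rewrite /deriv cats0.
Qed.

End RegularQuotients.

Lemma regular_lquot_is_LQ (Sigma : finType) (M : lang Sigma) :
  regular M -> forall P, is_LQ M (lquot P M).
Proof. by case=> Q [d [q0 [F HM]]]; apply: lquot_is_LQ HM. Qed.

Lemma regular_LQ_is_jsl_dfa (Sigma : finType) (M : lang Sigma) :
  regular M -> is_jsl_dfa (LQ M).
Proof. by case=> Q [d [q0 [F HM]]]; apply: LQ_is_jsl_dfa HM. Qed.

(* Reversal preserves regularity: after reading w, the reversed automaton
   is in the set of states from which w^r is accepted. *)
Lemma regular_rev (Sigma : finType) (M : lang Sigma) :
  regular M -> regular (rev_lang M).
Proof.
case=> Q [d [q0 [F HM]]].
pose rdelta (S : {set Q}) a := [set q | d q a \in S].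
exists {set Q}, rdelta, [set q | F q], (fun S : {set Q} => q0 \in S) => w.
rewrite /rev_lang HM.
suff -> : forall q, q \in foldl rdelta [set q | F q] w = F (foldl d q (rev w)) by [].
elim/last_ind: w => [|w a IH] q; first by rewrite inE.
by rewrite foldl_rcons rev_rcons inE IH.
Qed.

Lemma rev_langK (Sigma : Type) (M : lang Sigma) : rev_lang (rev_lang M) = M.
Proof. by apply: lang_ext => w; rewrite /rev_lang revK. Qed.

Lemma dr_charac (Sigma : Type) (L K : lang Sigma) (w : word Sigma) :
  dr L K w <-> ~ (forall v, deriv (rev w) (rev_lang L) v -> K v).
Proof.
rewrite /dr /lquot /compl_lang /rev_lang /deriv; split.
- by case=> u [nKu Lu] H; apply/nKu/H; rewrite rev_cat !revK.
- move=> nsub; apply: NNPP => ndr; apply: nsub => v Lv; apply: NNPP => nKv.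
  by apply: ndr; exists (rev v); rewrite revK; split=> //; move: Lv; rewrite rev_cat revK.
Qed.

Lemma dr_dr (Sigma : Type) (M K : lang Sigma) : is_LQ (rev_lang M) K ->
  forall v, dr (rev_lang M) (dr M K) v <-> K v.
Proof.
move=> HK v; split.
- case=> y [ndr Mv]; apply: NNPP => nKv; apply: ndr.
  exists (rev v); rewrite /compl_lang /rev_lang revK; split=> //.
  by move: Mv; rewrite /deriv /rev_lang rev_cat.
- move=> /(LQ_union_of_derivs HK) [s [Mv sub]]; exists s; split=> //.
  case=> u [nKu Mu]; apply/nKu/sub.
  by rewrite /deriv /rev_lang rev_cat revK.
Qed.

Section DualityOfMinimalDfas.
Variables (Sigma : finType) (L : lang Sigma).
Hypothesis HL : regular L.

Local Notation Lr := (rev_lang L).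
Local Notation D := (dual (LQ Lr)).

Definition dr_state (x : LQst Lr) : LQst L :=
  exist _ (dr L (proj1_sig x)) (regular_lquot_is_LQ HL _).

Definition dr_state_inv (X : LQst L) : LQst Lr :=
  exist _ (dr Lr (proj1_sig X)) (regular_lquot_is_LQ (regular_rev HL) _).

Lemma dr_stateK : cancel dr_state dr_state_inv.
Proof. by move=> x; apply: LQ_eq; apply: dr_dr; apply: proj2_sig x. Qed.

Lemma dr_state_invK : cancel dr_state_inv dr_state.
Proof.
move=> X; apply: LQ_eq => v /=.
have := @dr_dr _ Lr (proj1_sig X); rewrite rev_langK; apply.
exact: proj2_sig X.
Qed.

Lemma dr_state_at (x : LQst Lr) w :
  proj1_sig (dr_state x) w <-> ~ jle (LQ Lr) (deriv_state Lr (rev w)) x.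
Proof. exact: dr_charac. Qed.

Let HLr : is_jsl_dfa (LQ Lr) := regular_LQ_is_jsl_dfa (regular_rev HL).

(* dr_L preserves the structure: meets of LQ(L^r) go to unions, the top to
   the empty language, delta*_a to a^{-1}, and the largest non-final state
   to L; finality is preserved since (eps^r)^{-1}L^r = L^r. *)
Lemma dr_state_join x y :
  dr_state (jjoin D x y) = jjoin (LQ L) (dr_state x) (dr_state y).
Proof.
apply: LQ_eq => w; rewrite dr_state_at (dual_join_spec HLr).
rewrite [X in _ <-> X]/= !dr_charac.
split=> [/not_and_or nle|[] nle [le_x le_y]]; first exact: nle.
- exact: nle le_x.
- exact: nle le_y.
Qed.

Lemma dr_state_bot : dr_state (jbot D) = jbot (LQ L).
Proof.
apply: LQ_eq => w; rewrite dr_state_at; split=> [nle|[]].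
by apply: nle; apply: dual_bot_spec HLr _.
Qed.

Lemma dr_state_delta a x :
  dr_state (jdelta D a x) = jdelta (LQ L) a (dr_state x).
Proof.
apply: LQ_eq => w; rewrite dr_state_at (dual_delta_spec HLr).
by rewrite jdelta_deriv_state -rev_cons -dr_state_at.
Qed.

Lemma dr_state_init : dr_state (jinit D) = jinit (LQ L).
Proof.
apply: LQ_eq => w; rewrite dr_state_at (dual_init_spec HLr) /= /deriv /rev_lang.
by rewrite cats0 revK; split=> [/NNPP|Lw /(_ Lw)].
Qed.

Lemma dr_state_final x : jfinal D x <-> jfinal (LQ L) (dr_state x).
Proof. exact: iff_sym (dr_state_at x [::]). Qed.

Lemma dr_state_morph : jsl_morph (dr_state : jst D -> jst (LQ L)).
Proof.
split; first exact: dr_state_join.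
split; first exact: dr_state_bot.
split; first exact: dr_state_delta.
split; first exact: dr_state_init.
exact: dr_state_final.
Qed.

End DualityOfMinimalDfas.

Theorem proposition3p9 (Sigma : finType) (L : lang Sigma) :
  regular L ->
  is_jsl_dfa (LQ L) /\ is_jsl_dfa (dual (LQ (rev_lang L))) /\
  exists f : jst (dual (LQ (rev_lang L))) -> jst (LQ L),
    (forall K w, proj1_sig (f K) w <-> dr L (proj1_sig K) w) /\
    jsl_iso f.
Proof.
move=> HL.
split; first exact: regular_LQ_is_jsl_dfa.
split; first exact/dual_is_jsl_dfa/regular_LQ_is_jsl_dfa/regular_rev.
exists (dr_state HL); split=> //.
have [fK gK] := (dr_stateK HL, dr_state_invK HL).
split; first exact: dr_state_morph.
exists (dr_state_inv HL); split=> //.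
exact: morph_inv (dr_state_morph HL) fK gK.
Qed.
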